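(* In a monadic Markov logic network over a finite domain, the set of ground atoms (the random variables) has an exchangeable decomposition whose width equals the number of predicates.
   Context: A Markov logic network (MLN) is a finite set of pairs $(w,f)$ with $w\in\mathbb{R}$ and $f$ a function-free first-order formula containing no constants. Given a finite domain $\mathsf{D}$ of constants, the grounding replaces each formula by all its instantiations of logical variables with constants (same weight). The random variables are all ground atoms (binary); a world $\bm{x}$ (truth assignment to all ground atoms) has probability proportional to $\prod \exp(w)$ over ground formulas $(w,f)$ satisfied by $\bm{x}$. An MLN is monadic if all its predicates are unary. A variable decomposition $\{\bm{X}_1,\dots,\bm{X}_k\}$ partitions the variables; its width is $\max_i|\bm{X}_i|$. It is exchangeable if all blocks have equal size, each block is an ordered tuple, and for every permutation $\pi$ of $\{1,\dots,k\}$, $\Pr(\bm{X}_1=\bm{x}_1,\dots,\bm{X}_k=\bm{x}_k)=\Pr(\bm{X}_1=\bm{x}_{\pi(1)},\dots,\bm{X}_k=\bm{x}_{\pi(k)})$ for all block assignments. *)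

From HB Require Import structures.
From mathcomp Require Import all_boot all_order all_algebra perm.
From mathcomp Require Import reals sequences exp.
Set Implicit Arguments. Unset Strict Implicit. Unset Printing Implicit Defensive.
Import Order.TTheory GRing.Theory Num.Theory.
Local Open Scope ring_scope.

(** Function-free, constant-free first-order formulas (with equality) over a
    monadic signature of [m] unary predicates [P_0 .. P_(m-1)].
    Logical variables are named by natural numbers. *)
Inductive mformula (m : nat) : Type :=
  | FTrue
  | FFalse
  | FAtom of 'I_m & nat
  | FEq of nat & nat
  | FNot of mformula m
  | FAnd of mformula m & mformula m
  | FOr of mformula m & mformula m
  | FImp of mformula m & mformula m
  | FForall of nat & mformula m
  | FExists of nat & mformula m.

(** Free logical variables (possibly with repetitions). *)
Fixpoint fv m (f : mformula m) : seq nat :=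
  match f with
  | FTrue | FFalse => [::]
  | FAtom _ v => [:: v]
  | FEq u v => [:: u; v]
  | FNot g => fv g
  | FAnd g h | FOr g h | FImp g h => fv g ++ fv h
  | FForall v g | FExists v g => [seq u <- fv g | u != v]
  end.

Notation atom m D := (prod (ordinal m) (Finite.sort D)) (only parsing).
Notation world m D := {ffun atom m D -> bool} (only parsing).

Definition upd (D : Type) (env : nat -> D) (v : nat) (d : D) : nat -> D :=
  fun u => if u == v then d else env u.

Fixpoint sat m (D : finType) (x : world m D) (f : mformula m) (env : nat -> D) : bool :=
  match f with
  | FTrue => true
  | FFalse => false
  | FAtom i v => x (i, env v)
  | FEq u v => env u == env v
  | FNot g => ~~ sat x g env
  | FAnd g h => sat x g env && sat x h env
  | FOr g h => sat x g env || sat x h env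
  | FImp g h => sat x g env ==> sat x h env
  | FForall v g => [forall d : D, sat x g (upd env v d)]
  | FExists v g => [exists d : D, sat x g (upd env v d)]
  end.

Definition gvars m (f : mformula m) : seq nat := undup (fv f).

(** A grounding of f: a map from its (distinct) free variables to constants.
    [env_of d0 g] is the induced variable assignment ([d0] is only used for
    variables that do not occur free in f, hence is semantically irrelevant). *)
Definition env_of m (D : finType) (d0 : D) (f : mformula m)
    (g : {ffun 'I_(size (gvars f)) -> D}) : nat -> D :=
  fun u => match insub (index u (gvars f)) with
           | Some i => g i
           | None => d0
           end.

Definition mln (R : realType) (m : nat) := seq (R * mformula m)%type.

Definition mln_weight (R : realType) m (D : finType) (d0 : D) (M : mln R m)
    (x : world m D) : R :=
  \prod_(p <- M)
    \prod_(g : {ffun 'I_(size (gvars p.2)) -> D})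
       (if sat x p.2 (@env_of m D d0 p.2 g) then expR p.1 else 1).

Definition mln_prob (R : realType) m (D : finType) (d0 : D) (M : mln R m)
    (E : pred (world m D)) : R :=
  (\sum_(x : world m D | E x) mln_weight d0 M x) /
  (\sum_(x : world m D) mln_weight d0 M x).

Definition is_decomposition m (D : finType) k (B : 'I_k -> seq (atom m D)) : Prop :=
  (forall i, B i != [::]) /\
  perm_eq (flatten [seq B i | i <- enum 'I_k]) (enum {: atom m D}).

Definition width m (D : finType) k (B : 'I_k -> seq (atom m D)) : nat :=
  \max_(i < k) size (B i).

Definition block_event m (D : finType) k (B : 'I_k -> seq (atom m D)) s
    (xs : 'I_k -> s.-tuple bool) : pred (world m D) :=
  fun x => [forall i : 'I_k, map x (B i) == xs i].

Definition exchangeable (R : realType) m (D : finType) (d0 : D) (M : mln R m)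
    k (B : 'I_k -> seq (atom m D)) : Prop :=
  exists s : nat,
    (forall i, size (B i) = s) /\
    forall (pi : {perm 'I_k}) (xs : 'I_k -> s.-tuple bool),
      mln_prob d0 M (block_event B xs) =
      mln_prob d0 M (block_event B (fun i => xs (pi i))).

From HB Require Import structures.
From mathcomp Require Import all_boot all_order all_algebra perm.
From mathcomp Require Import reals sequences exp.
Set Implicit Arguments. Unset Strict Implicit. Unset Printing Implicit Defensive.
Import Order.TTheory GRing.Theory Num.Theory.

(* Group the ground atoms by constant: block c = (P_0(c), ..., P_(m-1)(c)).
   Since MLN formulas mention no constants, renaming the constants of the
   domain by any permutation preserves the weight of every world; permuting
   the blocks is exactly such a renaming, so the law of the blocks is
   exchangeable, and each block has one atom per predicate. *)

Lemma sat_ext m (D : finType) (x : world m D) (f : mformula m) env env' :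
  {in fv f, env =1 env'} -> sat x f env = sat x f env'.
Proof.
elim: f env env' => //=.
- by move=> i v env env' eq_env; rewrite eq_env ?mem_head.
- by move=> u v env env' eq_env; rewrite !eq_env // !inE eqxx ?orbT.
- by move=> g IHg env env' /IHg ->.
- 1-3: by move=> g IHg h IHh env env' eq_env; rewrite (IHg _ env') ?(IHh _ env')
         // => u fv_u; apply: eq_env; rewrite mem_cat fv_u ?orbT.
- 1-2: move=> v g IHg env env' eq_env.
  + apply: eq_forallb => d; apply: IHg => u fv_u; rewrite /upd; case: eqP => // /eqP neq_uv.
    by apply: eq_env; rewrite mem_filter neq_uv.
  + apply: eq_existsb => d; apply: IHg => u fv_u; rewrite /upd; case: eqP => // /eqP neq_uv.
    by apply: eq_env; rewrite mem_filter neq_uv.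
Qed.

Lemma env_of_comp m (D : finType) (d0 : D) (f : mformula m) (h : D -> D)
    (g : {ffun 'I_(size (gvars f)) -> D}) :
  {in fv f, env_of d0 [ffun i => h (g i)] =1 h \o env_of d0 g}.
Proof.
move=> u fv_u; rewrite /env_of /=.
have idx_u : (index u (gvars f) < size (gvars f))%N.
  by rewrite index_mem mem_undup.
by rewrite insubT /= ffunE.
Qed.

Section Relabel.
Variables (m : nat) (D : finType) (s : {perm D}).

Definition relabel (x : world m D) : world m D := [ffun a => x (a.1, s a.2)].

Lemma sat_relabel x (f : mformula m) env :
  sat (relabel x) f env = sat x f (s \o env).
Proof.
elim: f env => //=.
- by move=> i v env; rewrite ffunE.
- by move=> u v env; rewrite (inj_eq perm_inj).
- by move=> g IHg env; rewrite IHg.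
- 1-3: by move=> g IHg h IHh env; rewrite IHg IHh.
- 1-2: move=> v g IHg env;
  have sat_upd d : sat (relabel x) g (upd env v d) = sat x g (upd (s \o env) v (s d))
    by rewrite IHg; apply: sat_ext => u _; rewrite /upd /=; case: eqP.
  + apply/forallP/forallP => [sat_all d | sat_all d]; last by rewrite sat_upd.
    by have := sat_all ((s^-1)%g d); rewrite sat_upd permKV.
  + apply/existsP/existsP => -[d sat_d]; first by exists (s d); rewrite -sat_upd.
    by exists ((s^-1)%g d); rewrite sat_upd permKV.
Qed.

Lemma relabel_inj : injective relabel.
Proof.
move=> x y /ffunP eq_xy; apply/ffunP => -[i d].
by have := eq_xy (i, (s^-1)%g d); rewrite !ffunE /= permKV.
Qed.

Lemma mln_weight_relabel (R : realType) (d0 : D) (M : mln R m) x :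
  mln_weight d0 M (relabel x) = mln_weight d0 M x.
Proof.
apply: eq_bigr => -[w f] _ /=.
pose sg (g : {ffun 'I_(size (gvars f)) -> D}) := [ffun i => s (g i)].
have sg_inj : injective sg.
  move=> g g' /ffunP eq_g; apply/ffunP => i.
  by have := eq_g i; rewrite !ffunE => /perm_inj.
rewrite [RHS](reindex_inj sg_inj); apply: eq_bigr => g _.
by rewrite sat_relabel (sat_ext _ (env_of_comp d0 s g)).
Qed.

Lemma mln_prob_relabel (R : realType) (d0 : D) (M : mln R m)
    (E E' : pred (world m D)) :
  (forall x, E' x = E (relabel x)) -> mln_prob d0 M E' = mln_prob d0 M E.
Proof.
move=> E'E; rewrite /mln_prob; congr (_ / _)%R.
rewrite [RHS](reindex_inj relabel_inj).
by apply: eq_big => x; rewrite ?E'E ?mln_weight_relabel.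
Qed.

End Relabel.

Definition const_blocks m (D : finType) (c : 'I_#|D|) : seq (atom m D) :=
  [seq (p, enum_val c) | p <- enum 'I_m].
Arguments const_blocks : clear implicits.

(* The permutation of the constants that moves the constant of rank [c] to
   the constant of rank [pi c]. *)
Definition enum_conj (D : finType) (pi : {perm 'I_#|D|}) : {perm D} :=
  perm (inj_comp enum_val_inj (inj_comp (@perm_inj _ pi) (@enum_rank_inj D))).

Section ConstBlocks.
Variables (m : nat) (D : finType).
Implicit Type c : 'I_#|D|.

Lemma size_const_blocks c : size (const_blocks m D c) = m.
Proof. by rewrite size_map size_enum_ord. Qed.

Lemma const_blocks_decomposition : (0 < m)%N -> is_decomposition (const_blocks m D).
Proof.
move=> m_gt0; split=> [c|]; first by rewrite -size_eq0 size_const_blocks -lt0n.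
change (perm_eq [seq (p, enum_val c) | c <- enum 'I_#|D|, p <- enum 'I_m]
                (enum {: 'I_m * D})).
apply: uniq_perm; rewrite ?enum_uniq //.
  apply: allpairs_uniq; rewrite ?enum_uniq //.
  by move=> [c p] [c' p'] _ _ /= [-> /enum_val_inj ->].
move=> [p d]; rewrite mem_enum; apply/allpairsP.
by exists (enum_rank d, p); rewrite !mem_enum enum_rankK.
Qed.

Lemma width_const_blocks : (0 < #|D|)%N -> width (const_blocks m D) = m.
Proof.
move=> D_gt0; apply/anti_leq/andP; split.
  by apply/bigmax_leqP => c _; rewrite size_const_blocks.
have := leq_bigmax (F := fun c => size (const_blocks m D c)) (Ordinal D_gt0).
by rewrite size_const_blocks.
Qed.

Lemma relabel_const_blocks (pi : {perm 'I_#|D|}) (x : world m D) c :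
  map (relabel (enum_conj pi) x) (const_blocks m D c) = map x (const_blocks m D (pi c)).
Proof.
by rewrite -!map_comp; apply: eq_map => p; rewrite /= ffunE permE /= enum_valK.
Qed.

Lemma const_blocks_exchangeable (R : realType) (d0 : D) (M : mln R m) :
  exchangeable d0 M (const_blocks m D).
Proof.
exists m; split=> [|pi xs]; first exact: size_const_blocks.
symmetry; apply: (mln_prob_relabel (s := enum_conj (pi^-1)%g)) => x; rewrite /block_event.
apply/forallP/forallP => blocks_x c.
  have := blocks_x ((pi^-1)%g c); rewrite permKV => /eqP <-.
  by apply/eqP; apply: relabel_const_blocks.
have := blocks_x (pi c) => /eqP <-.
by apply/eqP; have := relabel_const_blocks (pi^-1)%g x (pi c); rewrite permK => ->.
Qed.

End ConstBlocks.

Theorem theorem5 (R : realType) (m : nat) (D : finType) (d0 : D) (M : mln R m) :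
  exists (k : nat) (B : 'I_k -> seq (atom m D)),
    is_decomposition B /\ width B = m /\ exchangeable d0 M B.
Proof.
case: (posnP m) => [m0 | m_gt0]; last first.
  have D_gt0 : (0 < #|D|)%N by apply/card_gt0P; exists d0.
  exists #|D|, (const_blocks m D); split; first exact: const_blocks_decomposition.
  by split; [exact: width_const_blocks | exact: const_blocks_exchangeable].
(* Without predicates there are no atoms and the constant blocks would be
   empty, so the empty decomposition is used instead. *)
subst m; exists 0%N, (fun=> [::]); split; [split | split].
- by case.
- have -> : enum {: 'I_0 * D} = [::] by apply: size0nil; rewrite -cardE card_prod card_ord.
  by rewrite enum_ord0.
- by rewrite /width big_ord0.
- exists 0%N; split=> [[]//|pi xs]; rewrite /mln_prob; congr (_ / _)%R.
  by apply: eq_bigl => x; apply/forallP/forallP => _ [].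
Qed.
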